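(* Let $\kappa:=\sup\{t\in[0,\infty): B(x_*,t)\subset\Omega\}$. Assume there exist $K>0$ and $0<p\le1$ with $$\|F'(x_* )^{-1}[F'(x)-F'(x_*+\tau(x-x_* ))]\|\le K(1-\tau^p)\|x-x_*\|^p\quad\text{for all }\tau\in[0,1],\ x\in B(x_*,\kappa).$$ Let $0\le\vartheta<1$, $0\le\omega_2<\omega_1$ with $\omega_1\vartheta+\omega_2<1$, $\lambda\in[0,(1-\omega_2-\omega_1\vartheta)/(\omega_1(1+\vartheta)))$, and $$\bar\sigma:=\min\Big\{\kappa,\Big[\frac{(1-\omega_1[(1+\vartheta)\lambda+\vartheta]-\omega_2)(p+1)}{K(p-\omega_1[(1+\vartheta)\lambda+\vartheta-p]-\omega_2(p+1)+1)}\Big]^{1/p}\Big\}.$$ Let $x_0\in C\cap B(x_*,\bar\sigma)\setminus\{x_*\}$, $\{\theta_k\}\subset[0,\lambda^2/2]$, and let $\{M_k\}$, $\{(s_k,r_k,y_k)\}$, $\{x_k\}$ be generated by the INL-CondG method (assume it does not stop). Assume for all $k\ge0$: $\|M_k^{-1}F'(x_k)\|\le\omega_1$, $\|M_k^{-1}F'(x_k)-I\|\le\omega_2$, and there are invertible $P_k$ and scalars $\eta_k$ with $\|P_kr_k\|\le\eta_k\|P_kF(x_k)\|$ and $0\le\eta_k\,\mathrm{cond}(P_kF'(x_k))\le\vartheta$. Then $\{x_k\}\subset B(x_*,\bar\sigma)\cap C$, $x_k\to x_*$, $$\|x_{k+1}-x_*\|<\|x_k-x_*\|,\qquad \limsup_{k\to\infty}\frac{\|x_{k+1}-x_*\|}{\|x_k-x_*\|}\le\omega_1[(1+\vartheta)\sqrt{2\tilde\theta}+\vartheta]+\omega_2,$$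 with $\tilde\theta=\limsup_k\theta_k$, and for all $k\ge0$ $$\|x_{k+1}-x_*\|\le\frac{\omega_1(1+\vartheta)(1+\lambda)pK}{(p+1)[1-K\|x_0-x_*\|^p]}\|x_k-x_*\|^{p+1}+\big(\omega_1[(1+\vartheta)\lambda+\vartheta]+\omega_2\big)\|x_k-x_*\|.$$
   Context: Setting: $\Omega\subset\mathbb{R}^n$ is open, $F:\Omega\to\mathbb{R}^n$ is continuously differentiable with Jacobian $F'(x)$, $C\subset\Omega$ is a nonempty convex compact set, and $x_*\in C$ satisfies $F(x_* )=0$ with $F'(x_* )$ nonsingular. $\|\cdot\|$ is the Euclidean norm on $\mathbb{R}^n$ and the induced operator norm on matrices; $B(a,\delta)$ is the open ball of center $a$ and radius $\delta$; $\mathrm{cond}(A)=\|A^{-1}\|\|A\|$. CondG procedure $z=\mathrm{CondG}(y,x,\varepsilon)$ (for $y\in\mathbb{R}^n$, $x\in C$, $\varepsilon\ge0$): set $z_1=x$, $t=1$. (P1) Compute an optimal solution $u_t$ of $g_t^*=\min_{u\in C}\langle z_t-y,u-z_t\rangle$. (P2) If $g_t^*\ge-\varepsilon$, set $z=z_t$ and stop; otherwise set $\alpha_t=\min\{1,-g_t^*/\|u_t-z_t\|^2\}$, $z_{t+1}=z_t+\alpha_t(u_t-z_t)$, $t\leftarrow t+1$ and go to (P1). INL-CondG method: given $x_0\in C$ and $\{\theta_j\}\subset[0,\infty)$, for $k=0,1,\dots$: if $F(x_k)=0$ stop; otherwise choose an invertible matrix $M_k$ (approximating $F'(x_k)$)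 and compute $(s_k,r_k,y_k)$ with $M_ks_k=-F(x_k)+r_k$, $y_k=x_k+s_k$; then set $x_{k+1}=\mathrm{CondG}(y_k,x_k,\theta_k\|s_k\|^2)$. *)

From mathcomp Require Import ssreflect ssrfun ssrbool eqtype ssrnat seq fintype bigop.
From Stdlib Require Import Reals ClassicalEpsilon.

Set Implicit Arguments.
Unset Strict Implicit.

Local Open Scope R_scope.

Definition vec (n : nat) := 'I_n -> R.
Definition mat (n : nat) := 'I_n -> 'I_n -> R.

Section LinAlg.
Context {n : nat}.

Definition vadd (x y : vec n) : vec n := fun i => x i + y i.
Definition vsub (x y : vec n) : vec n := fun i => x i - y i.
Definition vopp (x : vec n) : vec n := fun i => - x i.
Definition vscal (a : R) (x : vec n) : vec n := fun i => a * x i.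
Definition vzero : vec n := fun _ => 0.

Definition vinner (x y : vec n) : R := \big[Rplus/0]_(i < n) (x i * y i).
Definition vnorm (x : vec n) : R := sqrt (vinner x x).
Definition vdist (x y : vec n) : R := vnorm (vsub x y).

Definition mv (A : mat n) (x : vec n) : vec n :=
  fun i => \big[Rplus/0]_(j < n) (A i j * x j).
Definition mm (A B : mat n) : mat n :=
  fun i k => \big[Rplus/0]_(j < n) (A i j * B j k).
Definition msub (A B : mat n) : mat n := fun i j => A i j - B i j.
Definition mid : mat n := fun i j => if i == j then 1 else 0.

Definition invertible (A : mat n) : Prop :=
  exists B : mat n, mm A B = mid /\ mm B A = mid.
(* the inverse matrix (meaningful when A is invertible) *)
Definition minv (A : mat n) : mat n :=
  epsilon (inhabits mid) (fun B => mm A B = mid /\ mm B A = mid).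

Definition opnorm (A : mat n) : R :=
  epsilon (inhabits 0)
    (fun c => is_lub (fun r => exists x : vec n, vnorm x <= 1 /\ r = vnorm (mv A x)) c).
Definition cond (A : mat n) : R := opnorm (minv A) * opnorm A.

Definition vopen (U : vec n -> Prop) : Prop :=
  forall x, U x -> exists r, 0 < r /\ forall z, vdist z x < r -> U z.
Definition vconvex (C : vec n -> Prop) : Prop :=
  forall x y t, C x -> C y -> 0 <= t <= 1 -> C (vadd x (vscal t (vsub y x))).
Definition vcompact (C : vec n -> Prop) : Prop :=
  forall (I : Type) (U : I -> vec n -> Prop),
    (forall i, vopen (U i)) ->
    (forall x, C x -> exists i, U i x) ->
    exists l : list I, forall x, C x -> exists i, List.In i l /\ U i x.

Definition has_jacobian_on (Omega : vec n -> Prop) (F : vec n -> vec n)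
  (DF : vec n -> mat n) : Prop :=
  forall x, Omega x -> forall eps, 0 < eps -> exists delta, 0 < delta /\
    forall h : vec n, vnorm h < delta -> Omega (vadd x h) ->
      vnorm (vsub (vsub (F (vadd x h)) (F x)) (mv (DF x) h)) <= eps * vnorm h.
Definition continuous_on (Omega : vec n -> Prop) (DF : vec n -> mat n) : Prop :=
  forall x, Omega x -> forall eps, 0 < eps -> exists delta, 0 < delta /\
    forall z, Omega z -> vdist z x < delta -> opnorm (msub (DF z) (DF x)) < eps.
Definition C1_on (Omega : vec n -> Prop) (F : vec n -> vec n) (DF : vec n -> mat n) :=
  has_jacobian_on Omega F DF /\ continuous_on Omega DF.

(* The CondG procedure, as a relation: condG C y eps x z means that
   z = CondG(y, x, eps) is a possible (terminating) output, the optimal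
   solutions u_t of the linear subproblems being any minimizers. *)
Definition lin_opt (C : vec n -> Prop) (y z u : vec n) : Prop :=
  C u /\ forall v, C v -> vinner (vsub z y) (vsub u z) <= vinner (vsub z y) (vsub v z).

Inductive condG (C : vec n -> Prop) (y : vec n) (eps : R) : vec n -> vec n -> Prop :=
| condG_stop : forall z u,
    lin_opt C y z u -> - eps <= vinner (vsub z y) (vsub u z) ->
    condG C y eps z z
| condG_step : forall z u z',
    lin_opt C y z u -> vinner (vsub z y) (vsub u z) < - eps ->
    condG C y eps
      (vadd z (vscal (Rmin 1 (- vinner (vsub z y) (vsub u z) / (vnorm (vsub u z)) ^ 2))
                     (vsub u z))) z' ->
    condG C y eps z z'.

End LinAlg.

(* real power t^p for t >= 0, with the convention 0^p = 0 (p > 0) *)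
Definition rpow (t p : R) : R := if Rle_dec t 0 then 0 else Rpower t p.

(* extended-real suprema: None stands for +infinity *)
Definition is_ext_sup (E : R -> Prop) (k : option R) : Prop :=
  match k with
  | None => forall M, exists t, E t /\ M < t
  | Some s => is_lub E s
  end.
Definition ext_sup (E : R -> Prop) : option R :=
  epsilon (inhabits None) (is_ext_sup E).
Definition ext_lt (r : R) (k : option R) : Prop :=
  match k with None => True | Some s => r < s end.
Definition ext_min (k : option R) (r : R) : R :=
  match k with None => r | Some s => Rmin s r end.

(* limit superior of a real sequence (used for bounded sequences) *)
Definition is_limsup (u : nat -> R) (l : R) : Prop :=
  forall eps, 0 < eps ->
    (exists N, forall k, (N <= k)%nat -> u k < l + eps) /\
    (forall N, exists k, (N <= k)%nat /\ l - eps < u k).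
Definition limsup (u : nat -> R) : R := epsilon (inhabits 0) (is_limsup u).

(* Write e_k = x_k - xs.  Since F(xs) = 0, integrating the Hölder condition along the segment
   [xs, x_k] (here: the mean value theorem applied to a scalar comparison function) gives
   ||F'(xs)^-1 (F'(x_k) e_k - F(x_k))|| <= K p/(p+1) ||e_k||^(p+1), and its case tau = 0 gives
   ||F'(xs)^-1 F'(x_k) - I|| <= K ||e_k||^p < 1.  Hence F'(x_k) is invertible and the exact
   Newton correction F'(x_k)^-1 F(x_k) is within K p/(p+1) ||e_k||^(p+1) / (1 - K ||e_k||^p)
   of e_k.  The inexact step s_k differs from -M_k^-1 F(x_k) by M_k^-1 r_k, which the residual
   condition bounds through cond(P_k F'(x_k)); and as xs lies in C, the conditional gradient
   output satisfies ||x_{k+1} - xs||^2 <= ||y_k - xs||^2 + 2 theta_k ||s_k||^2.  Together: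
     ||e_{k+1}|| <= c ||e_k||^(p+1) + (w1 ((1 + vt) sqrt (2 theta_k) + vt) + w2) ||e_k||,
   and the choice of sigma makes c ||e_0||^p + w1 ((1 + vt) lam + vt) + w2 < 1, so the errors
   decrease geometrically; the limsup bound follows by letting ||e_k|| -> 0. *)

From mathcomp Require Import ssreflect ssrfun ssrbool eqtype ssrnat seq fintype bigop.
From Stdlib Require Import Reals ClassicalEpsilon FunctionalExtensionality Lra Psatz.
From mathcomp Require Import ssralg matrix Rstruct.
From Coquelicot Require Import Rbar Lim_seq.
Import GRing.Theory.
Local Open Scope R_scope.
Set Implicit Arguments.
Unset Strict Implicit.

Ltac vext := let i := fresh "i" in apply: functional_extensionality => i;
  rewrite /vadd /vsub /vscal /vopp /vzero; try ring.

Section Sums.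
Variable n : nat.
Implicit Types f g : 'I_n -> R.

Lemma sum_add f g :
  \big[Rplus/0]_(i < n) (f i + g i) = \big[Rplus/0]_(i < n) f i + \big[Rplus/0]_(i < n) g i.
Proof. exact: big_split. Qed.

Lemma sum_scal a f : \big[Rplus/0]_(i < n) (a * f i) = a * \big[Rplus/0]_(i < n) f i.
Proof. by rewrite big_distrr. Qed.

Lemma sum_opp f : \big[Rplus/0]_(i < n) (- f i) = - \big[Rplus/0]_(i < n) f i.
Proof. exact: sumrN. Qed.

Lemma sum_le f g : (forall i, f i <= g i) ->
  \big[Rplus/0]_(i < n) f i <= \big[Rplus/0]_(i < n) g i.
Proof. by move=> H; elim/big_rec2: _ => [|i a b _ Hab]; [lra | have := H i; lra]. Qed.

Lemma sum_ge0 f : (forall i, 0 <= f i) -> 0 <= \big[Rplus/0]_(i < n) f i.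
Proof. by move=> H; apply: (big_ind (fun a => 0 <= a)) => [|a b Ha Hb|i _]; [lra | lra | exact: H]. Qed.

Lemma le_sum_ge0 f i : (forall j, 0 <= f j) -> f i <= \big[Rplus/0]_(j < n) f j.
Proof.
move=> H; rewrite (bigD1 i) //= -{1}(Rplus_0_r (f i)); apply: Rplus_le_compat_l.
by apply: (big_ind (fun a => 0 <= a)) => [|a b Ha Hb|j _]; [lra | lra | exact: H].
Qed.

End Sums.

Section MatrixAlgebra.
Variable n : nat.

Definition mx_of (A : mat n) : 'M[R]_n := \matrix_(i, j) A i j.
Definition col_of (x : vec n) : 'cV[R]_n := \matrix_(i, j) x i.

Lemma mx_of_mm (A B : mat n) : mx_of (mm A B) = (mx_of A *m mx_of B)%R.
Proof. apply/matrixP=> i k; rewrite !mxE; apply: eq_bigr => j _; by rewrite !mxE. Qed.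

Lemma col_of_mv (A : mat n) (x : vec n) : col_of (mv A x) = (mx_of A *m col_of x)%R.
Proof. apply/matrixP=> i k; rewrite !mxE; apply: eq_bigr => j _; by rewrite !mxE. Qed.

Lemma mx_of_mid : mx_of (@mid n) = 1%:M%R.
Proof. apply/matrixP=> i k; rewrite !mxE /mid; by case: (i == k). Qed.

Lemma mx_of_inj (A B : mat n) : mx_of A = mx_of B -> A = B.
Proof.
move=> H; apply: functional_extensionality => i; apply: functional_extensionality => j.
by have := congr1 (fun M : 'M[R]_n => M i j) H; rewrite /= !mxE.
Qed.

Lemma col_of_inj (x y : vec n) : col_of x = col_of y -> x = y.
Proof.
move=> H; apply: functional_extensionality => i.
by have := congr1 (fun M : 'cV[R]_n => M i ord0) H; rewrite /= !mxE.
Qed.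

Lemma mmA (A B C : mat n) : mm A (mm B C) = mm (mm A B) C.
Proof. apply: mx_of_inj; by rewrite !mx_of_mm mulmxA. Qed.

Lemma mv_mm (A B : mat n) (x : vec n) : mv (mm A B) x = mv A (mv B x).
Proof. apply: col_of_inj; by rewrite !col_of_mv mx_of_mm mulmxA. Qed.

Lemma mv_mid (x : vec n) : mv (@mid n) x = x.
Proof. apply: col_of_inj; by rewrite col_of_mv mx_of_mid mul1mx. Qed.

Lemma mm_mid_l (A : mat n) : mm (@mid n) A = A.
Proof. apply: mx_of_inj; by rewrite mx_of_mm mx_of_mid mul1mx. Qed.

Lemma mm_mid_r (A : mat n) : mm A (@mid n) = A.
Proof. apply: mx_of_inj; by rewrite mx_of_mm mx_of_mid mulmx1. Qed.

Lemma mv_add (A : mat n) x y : mv A (vadd x y) = vadd (mv A x) (mv A y).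
Proof. vext; rewrite /mv -sum_add; apply: eq_bigr => j _; ring. Qed.

Lemma mv_scal (A : mat n) a x : mv A (vscal a x) = vscal a (mv A x).
Proof. vext; rewrite /mv -sum_scal; apply: eq_bigr => j _; ring. Qed.

Lemma mv_sub (A : mat n) x y : mv A (vsub x y) = vsub (mv A x) (mv A y).
Proof. vext; rewrite /mv /Rminus -sum_opp -sum_add; apply: eq_bigr => j _; ring. Qed.

Lemma mv_opp (A : mat n) x : mv A (vopp x) = vopp (mv A x).
Proof. vext; rewrite /mv -sum_opp; apply: eq_bigr => j _; ring. Qed.

Lemma mv_msub (A B : mat n) x : mv (msub A B) x = vsub (mv A x) (mv B x).
Proof. vext; rewrite /mv /Rminus -sum_opp -sum_add; apply: eq_bigr => j _; rewrite /msub; ring. Qed.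

Lemma mv_zero (A : mat n) : mv A vzero = vzero.
Proof. vext; rewrite /mv big1 // => j _; ring. Qed.

Lemma invertible_of_kernel0 (D : mat n) :
  (forall v, mv D v = vzero -> v = vzero) -> invertible D.
Proof.
move=> Hker.
have Hunit : mx_of D \in unitmx.
  rewrite unitmxE unitfE -det_tr; apply/negP => /det0P [w Hw0 Hw].
  pose v : vec n := fun i => w ord0 i.
  have Hv : mv D v = vzero.
    apply: functional_extensionality => j.
    transitivity ((w *m (mx_of D)^T)%R ord0 j); last by rewrite Hw mxE.
    rewrite mxE; apply: eq_bigr => i _; rewrite !mxE /v; apply: Rmult_comm.
  move/negP: Hw0; apply; apply/eqP/matrixP => i j.
  by rewrite (ord1 i) !mxE; have := congr1 (fun f => f j) (Hker v Hv).
have Einv : mx_of (fun i j => invmx (mx_of D) i j) = invmx (mx_of D).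
  by apply/matrixP=> i j; rewrite mxE.
exists (fun i j => invmx (mx_of D) i j).
by split; apply: mx_of_inj; rewrite mx_of_mm mx_of_mid Einv ?mulmxV ?mulVmx.
Qed.

Lemma minv_spec (A : mat n) :
  invertible A -> mm A (minv A) = mid /\ mm (minv A) A = mid.
Proof. exact: epsilon_spec. Qed.

Lemma invertible_mm (A B : mat n) : invertible A -> invertible B -> invertible (mm A B).
Proof.
move=> [A' [HA1 HA2]] [B' [HB1 HB2]]; exists (mm B' A'); split.
- by rewrite -mmA (mmA B B' A') HB1 mm_mid_l HA1.
- by rewrite -mmA (mmA A' A B) HA2 mm_mid_l HB2.
Qed.

End MatrixAlgebra.

Section EuclideanNorm.
Variable n : nat.
Implicit Types x y z : vec n.

Lemma vinnerC x y : vinner x y = vinner y x.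
Proof. rewrite /vinner; apply: eq_bigr => i _; ring. Qed.

Lemma vinnerDl x y z : vinner (vadd x y) z = vinner x z + vinner y z.
Proof. rewrite /vinner -sum_add; apply: eq_bigr => i _; rewrite /vadd; ring. Qed.

Lemma vinnerDr x y z : vinner z (vadd x y) = vinner z x + vinner z y.
Proof. by rewrite vinnerC vinnerDl !(vinnerC z). Qed.

Lemma vinnerZl a x y : vinner (vscal a x) y = a * vinner x y.
Proof. rewrite /vinner -sum_scal; apply: eq_bigr => i _; rewrite /vscal; ring. Qed.

Lemma vinnerZr a x y : vinner y (vscal a x) = a * vinner y x.
Proof. by rewrite vinnerC vinnerZl vinnerC. Qed.

Lemma vinnerBl x y z : vinner (vsub x y) z = vinner x z - vinner y z.
Proof.
have -> : vsub x y = vadd x (vscal (-1) y) by vext.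
by rewrite vinnerDl vinnerZl; ring.
Qed.

Lemma vinnerBr x y z : vinner z (vsub x y) = vinner z x - vinner z y.
Proof. by rewrite vinnerC vinnerBl !(vinnerC z). Qed.

Lemma vinner_ge0 x : 0 <= vinner x x.
Proof. apply: sum_ge0 => i; nra. Qed.

Lemma vinner_eq0 x : vinner x x = 0 -> x = vzero.
Proof.
move=> H; vext; have := @le_sum_ge0 _ (fun i => x i * x i) i (fun i => ltac:(nra)).
rewrite -/(vinner x x) H; nra.
Qed.

Lemma vinner0l y : vinner vzero y = 0.
Proof. rewrite /vinner big1 // => i _; rewrite /vzero; ring. Qed.

Lemma vnorm_ge0 x : 0 <= vnorm x.
Proof. exact: sqrt_pos. Qed.

Lemma vnorm_sq x : vnorm x * vnorm x = vinner x x.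
Proof. exact/sqrt_sqrt/vinner_ge0. Qed.

Lemma vnorm_eq0 x : vnorm x = 0 -> x = vzero.
Proof. by move=> H; apply: vinner_eq0; rewrite -vnorm_sq H; ring. Qed.

Lemma vnorm0 : vnorm (@vzero n) = 0.
Proof. by rewrite /vnorm vinner0l sqrt_0. Qed.

Lemma cauchy_schwarz_sq x y : vinner x y * vinner x y <= vinner x x * vinner y y.
Proof.
have Hy := vinner_ge0 y.
case: (Req_dec (vinner y y) 0) => [/vinner_eq0 -> | Hy0].
  by rewrite vinnerC !vinner0l; nra.
set t := vinner x y / vinner y y.
have := vinner_ge0 (vsub x (vscal t y)).
rewrite !vinnerBl !vinnerBr !vinnerZl !vinnerZr (vinnerC y x).
have -> : vinner x x - t * vinner x y - (t * vinner x y - t * (t * vinner y y))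
  = vinner x x - vinner x y * vinner x y / vinner y y by rewrite /t; field.
move=> H; have := Rmult_le_compat_r _ _ _ Hy H.
have -> : (vinner x x - vinner x y * vinner x y / vinner y y) * vinner y y
  = vinner x x * vinner y y - vinner x y * vinner x y by field.
lra.
Qed.

Lemma cauchy_schwarz x y : Rabs (vinner x y) <= vnorm x * vnorm y.
Proof.
rewrite -(Rabs_pos_eq (vnorm x * vnorm y)); last by apply: Rmult_le_pos; apply: vnorm_ge0.
apply: Rsqr_le_abs_0; rewrite Rsqr_mult /Rsqr !vnorm_sq.
exact: cauchy_schwarz_sq.
Qed.

Lemma vinner_le x y : vinner x y <= vnorm x * vnorm y.
Proof. exact: Rle_trans (Rle_abs _) (cauchy_schwarz x y). Qed.

Lemma vnormD x y : vnorm (vadd x y) <= vnorm x + vnorm y.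
Proof.
have Hx := vnorm_ge0 x; have Hy := vnorm_ge0 y; have Hxy := vnorm_ge0 (vadd x y).
have H := vnorm_sq (vadd x y).
rewrite vinnerDl !vinnerDr (vinnerC y x) -!vnorm_sq in H.
have := vinner_le x y; nra.
Qed.

Lemma vnormZ a x : vnorm (vscal a x) = Rabs a * vnorm x.
Proof.
rewrite /vnorm vinnerZl vinnerZr -Rmult_assoc sqrt_mult; [|nra|exact: vinner_ge0].
by rewrite -Rsqr_def sqrt_Rsqr_abs.
Qed.

Lemma vnormN x : vnorm (vopp x) = vnorm x.
Proof.
have -> : vopp x = vscal (-1) x by vext.
by rewrite vnormZ Rabs_Ropp Rabs_R1 Rmult_1_l.
Qed.

Lemma vnormB x y : vnorm (vsub x y) <= vnorm x + vnorm y.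
Proof.
have -> : vsub x y = vadd x (vopp y) by vext.
by rewrite -(vnormN y); apply: vnormD.
Qed.

Lemma vdist_eq0 x y : vdist x y = 0 -> x = y.
Proof.
move/vnorm_eq0 => H; apply: functional_extensionality => i.
by have := congr1 (fun f => f i) H; rewrite /vsub /vzero /=; lra.
Qed.

End EuclideanNorm.

Section OperatorNorm.
Variable n : nat.
Implicit Types (x : vec n) (A : mat n).

Definition opnorm_set A := fun r => exists x : vec n, vnorm x <= 1 /\ r = vnorm (mv A x).

Lemma opnorm_set_bound A : bound (opnorm_set A).
Proof.
exists (sqrt (\big[Rplus/0]_(i < n) vinner (fun j => A i j) (fun j => A i j))).
move=> _ [x [Hx ->]]; apply: sqrt_le_1_alt; apply: sum_le => i.
have Hxx : vinner x x <= 1 by rewrite -vnorm_sq; have := vnorm_ge0 x; nra.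
have := cauchy_schwarz_sq (fun j => A i j) x; have := vinner_ge0 (fun j => A i j).
rewrite /vinner /mv in Hxx |- *; nra.
Qed.

Lemma opnorm_set0 A : opnorm_set A 0.
Proof. by exists vzero; rewrite mv_zero vnorm0; split; lra. Qed.

Lemma opnorm_lub A : is_lub (opnorm_set A) (opnorm A).
Proof.
apply: epsilon_spec.
have [m Hm] := completeness _ (opnorm_set_bound A) (ex_intro _ 0 (opnorm_set0 A)).
by exists m.
Qed.

Lemma opnorm_ge0 A : 0 <= opnorm A.
Proof. exact: (proj1 (opnorm_lub A) _ (opnorm_set0 A)). Qed.

Lemma opnorm_mv A x : vnorm (mv A x) <= opnorm A * vnorm x.
Proof.
have Hx := vnorm_ge0 x; have HA := opnorm_ge0 A.
case: (Req_dec (vnorm x) 0) => [/vnorm_eq0 -> | Hx0].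
  by rewrite mv_zero vnorm0; nra.
have Hinv : 0 < / vnorm x by apply: Rinv_0_lt_compat; lra.
have H1 : vnorm (mv A (vscal (/ vnorm x) x)) <= opnorm A.
  apply: (proj1 (opnorm_lub A)); eexists; split; last reflexivity.
  by rewrite vnormZ Rabs_pos_eq ?Rinv_l; lra.
rewrite mv_scal vnormZ Rabs_pos_eq in H1; last lra.
have -> : vnorm (mv A x) = (/ vnorm x * vnorm (mv A x)) * vnorm x by field.
by apply: Rmult_le_compat_r; lra.
Qed.

End OperatorNorm.

Lemma vinnerNN n (x : vec n) : vinner (vopp x) (vopp x) = vinner x x.
Proof. rewrite /vinner; apply: eq_bigr => i _; rewrite /vopp; ring. Qed.

Lemma div_ge0 a b : 0 <= a -> 0 <= b -> 0 <= a / b.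
Proof.
move=> Ha Hb; case: (Req_dec b 0) => [-> | Hb0]; first by rewrite /Rdiv Rinv_0; lra.
by apply: Rmult_le_pos => //; apply/Rlt_le/Rinv_0_lt_compat; lra.
Qed.

Lemma condG_spec n (C : vec n -> Prop) y eps z z' :
  vconvex C -> 0 <= eps -> condG C y eps z z' -> C z ->
  forall w, C w ->
  C z' /\ vinner (vsub z' w) (vsub z' w) <= vinner (vsub y w) (vsub y w) + 2 * eps.
Proof.
move=> Hconv Heps; elim => {z z'}.
- move=> z u [Cu Hu] Hstop Cz w Cw; split => //.
  (* [y - w = - ((z - y) + (w - z))], and [<z - y, w - z> >= - eps] as [u] is optimal. *)
  move: Hstop (Hu w Cw) (vinner_ge0 (vsub z y)).
  have -> : vsub y w = vopp (vadd (vsub z y) (vsub w z)) by vext.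
  have -> : vsub z w = vopp (vsub w z) by vext.
  set a := vsub z y; set b := vsub w z.
  rewrite !vinnerNN (vinnerDl a b) (vinnerDr a b a) (vinnerDr a b b) (vinnerC b a); lra.
- move=> z u z' [Cu _] Hdesc _ IH Cz w Cw; apply: IH => //; apply: Hconv => //.
  split; last exact: Rmin_l.
  apply: Rmin_glb; first lra.
  by apply: div_ge0; [lra | apply: pow2_ge_0].
Qed.

Section LineDerivative.
Variable n : nat.
Variables (Omega : vec n -> Prop) (F : vec n -> vec n) (DF : vec n -> mat n).
Hypotheses (HO : vopen Omega) (HJ : has_jacobian_on Omega F DF).

Lemma jacobian_remainder_on_line X e eps : Omega X -> 0 < eps ->
  exists delta, 0 < delta /\ forall h, Rabs h < delta ->
    Omega (vadd X (vscal h e)) /\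
    vnorm (vsub (vsub (F (vadd X (vscal h e))) (F X)) (vscal h (mv (DF X) e)))
      <= eps * (Rabs h * vnorm e).
Proof.
move=> HX Heps.
have [r [Hr Hball]] := HO HX.
have [d [Hd Hrem]] := HJ HX Heps.
have He := vnorm_ge0 e.
exists (Rmin d r / (vnorm e + 1)); split.
  by apply: Rdiv_lt_0_compat; [apply: Rmin_glb_lt | lra].
move=> h Hh.
have Hhe : vnorm (vscal h e) < Rmin d r.
  rewrite vnormZ; have := Rabs_pos h.
  have : Rabs h * (vnorm e + 1) < Rmin d r.
    have -> : Rmin d r = Rmin d r / (vnorm e + 1) * (vnorm e + 1) by field; lra.
    by apply: Rmult_lt_compat_r; lra.
  nra.
have HOh : Omega (vadd X (vscal h e)).
  apply: Hball; rewrite /vdist.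
  have -> : vsub (vadd X (vscal h e)) X = vscal h e by vext.
  have := Rmin_r d r; lra.
split => //.
rewrite -mv_scal -vnormZ; apply: Hrem => //; have := Rmin_l d r; lra.
Qed.

Lemma line_deriv (u x0 e : vec n) (A : mat n) t :
  Omega (vadd x0 (vscal t e)) ->
  derivable_pt_lim (fun s => vinner u (mv A (F (vadd x0 (vscal s e))))) t
     (vinner u (mv A (mv (DF (vadd x0 (vscal t e))) e))).
Proof.
move=> HX eps Heps.
set X := vadd x0 (vscal t e) in HX *.
set c := vnorm u * opnorm A * vnorm e + 1.
have Hc0 : 0 <= vnorm u * opnorm A * vnorm e.
  by apply: Rmult_le_pos; [apply: Rmult_le_pos|]; [apply: vnorm_ge0 | apply: opnorm_ge0 | apply: vnorm_ge0].
have Hc : 0 < 2 * c by rewrite /c; lra.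
have [d [Hd Hrem]] := jacobian_remainder_on_line e HX (Rdiv_lt_0_compat eps (2 * c) Heps Hc).
exists (mkposreal d Hd) => h Hh0 /= Hh.
have [_ Hw] := Hrem h Hh.
have -> : vadd x0 (vscal (t + h) e) = vadd X (vscal h e) by rewrite /X; vext.
set w := vsub (vsub (F (vadd X (vscal h e))) (F X)) (vscal h (mv (DF X) e)) in Hw.
have -> : (vinner u (mv A (F (vadd X (vscal h e)))) - vinner u (mv A (F X))) / h
          - vinner u (mv A (mv (DF X) e)) = vinner u (mv A w) / h.
  by rewrite /w !mv_sub !vinnerBr mv_scal vinnerZr; field.
have Hh' : 0 < Rabs h by apply: Rabs_pos_lt.
rewrite /Rdiv Rabs_mult Rabs_inv; apply: (Rmult_lt_reg_r (Rabs h)) => //.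
rewrite Rmult_assoc Rinv_l ?Rmult_1_r; last lra.
apply: (Rle_lt_trans _ _ _ (cauchy_schwarz _ _)).
apply: (Rle_lt_trans _ (vnorm u * (opnorm A * (eps / (2 * c) * (Rabs h * vnorm e))))).
  apply: Rmult_le_compat_l; first exact: vnorm_ge0.
  apply: (Rle_trans _ _ _ (opnorm_mv _ _)); apply: Rmult_le_compat_l => //; exact: opnorm_ge0.
have -> : vnorm u * (opnorm A * (eps / (2 * c) * (Rabs h * vnorm e)))
  = eps * Rabs h * ((vnorm u * opnorm A * vnorm e) / (2 * c)) by field; lra.
rewrite -[X in _ < X]Rmult_1_r; apply: Rmult_lt_compat_l; first nra.
apply: (Rmult_lt_reg_r (2 * c)) => //.
rewrite /Rdiv Rmult_assoc Rinv_l /c; lra.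
Qed.

Lemma F_small_on_line xs e : Omega xs -> F xs = vzero ->
  exists a0, 0 < a0 /\ forall a, 0 < a < a0 ->
    vnorm (F (vadd xs (vscal a e))) <= a * ((opnorm (DF xs) + 1) * vnorm e).
Proof.
move=> HX HF0.
have [d [Hd Hrem]] := jacobian_remainder_on_line e HX Rlt_0_1.
exists d; split => // a Ha.
have [_ Hw] := Hrem a ltac:(rewrite Rabs_pos_eq; lra).
rewrite HF0 Rabs_pos_eq in Hw; last lra.
have -> : F (vadd xs (vscal a e)) =
  vadd (vsub (vsub (F (vadd xs (vscal a e))) vzero) (vscal a (mv (DF xs) e)))
       (vscal a (mv (DF xs) e)) by vext.
apply: (Rle_trans _ _ _ (vnormD _ _)); rewrite vnormZ Rabs_pos_eq; last lra.
have := opnorm_mv (DF xs) e; have := vnorm_ge0 e; nra.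
Qed.

End LineDerivative.

Lemma rpow_pos t q : 0 < t -> rpow t q = Rpower t q.
Proof. by move=> Ht; rewrite /rpow; case: Rle_dec => // H; lra. Qed.

Lemma rpow0 q : rpow 0 q = 0.
Proof. by rewrite /rpow; case: Rle_dec => // H; lra. Qed.

Lemma rpow_ge0 t q : 0 <= rpow t q.
Proof. by rewrite /rpow; case: Rle_dec => H /=; [lra | exact: Rlt_le (exp_pos _)]. Qed.

Lemma rpowS t q : 0 <= t -> rpow t (q + 1) = t * rpow t q.
Proof.
move=> Ht; case: (Req_dec t 0) => [-> | Ht0]; first by rewrite !rpow0; ring.
by rewrite !rpow_pos ?Rpower_plus ?Rpower_1; lra.
Qed.

Lemma rpow_le a b q : 0 <= q -> 0 <= a <= b -> rpow a q <= rpow b q.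
Proof.
move=> Hq Hab; case: (Req_dec a 0) => [-> | Ha0]; first by rewrite rpow0; apply: rpow_ge0.
by rewrite !rpow_pos; try lra; apply: Rle_Rpower_l; lra.
Qed.

Lemma Rpower_le1 t q : 0 <= q -> 0 < t <= 1 -> Rpower t q <= 1.
Proof.
move=> Hq Ht; have <- : Rpower 1 q = 1 by rewrite /Rpower ln_1 Rmult_0_r exp_0.
exact: Rle_Rpower_l.
Qed.

Lemma Rpower_inv_lt t q b : 0 < q -> 0 < b -> 0 <= t < Rpower b (/ q) -> rpow t q < b.
Proof.
move=> Hq Hb Ht; case: (Req_dec t 0) => [-> | Ht0]; first by rewrite rpow0.
rewrite rpow_pos; last lra.
have : Rpower t q < Rpower (Rpower b (/ q)) q by apply: Rlt_Rpower_l; lra.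
by rewrite Rpower_mult Rinv_l ?Rpower_1; lra.
Qed.

Lemma Rpower_succ_div_le a p : 0 < p -> 0 < a <= 1 -> 0 <= a - Rpower a (p + 1) / (p + 1).
Proof.
move=> Hp Ha; rewrite Rpower_plus Rpower_1; last lra.
have := Rpower_le1 (Rlt_le _ _ Hp) Ha; have := exp_pos (p * ln a); rewrite -/(Rpower a p).
move=> Hpos Hle; suff : Rpower a p * a / (p + 1) <= a by lra.
apply: (Rmult_le_reg_r (p + 1)); first lra.
rewrite /Rdiv Rmult_assoc Rinv_l; nra.
Qed.

Lemma le0_of_le_small_mul X C a1 :
  0 < a1 -> 0 <= C -> (forall a, 0 < a < a1 -> X <= a * C) -> X <= 0.
Proof.
move=> Ha1 HC H; apply: Rle_plus_epsilon => eps Heps; rewrite Rplus_0_l.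
set a := Rmin (a1 / 2) (eps / (C + 1)).
have Ha : 0 < a by apply: Rmin_glb_lt; apply: Rdiv_lt_0_compat; lra.
have HaC : a * (C + 1) <= eps.
  have -> : eps = eps / (C + 1) * (C + 1) by field; lra.
  by apply: Rmult_le_compat_r; [lra | exact: Rmin_r].
have Ha1' : a < a1 by have := Rmin_l (a1 / 2) (eps / (C + 1)); rewrite -/a; lra.
have := H a (conj Ha Ha1'); nra.
Qed.

Lemma le0_at1_of_deriv_le0 (f f' : R -> R) a0 C : 0 < a0 -> 0 <= C ->
  (forall s, 0 < s <= 1 -> derivable_pt_lim f s (f' s)) ->
  (forall s, 0 < s <= 1 -> f' s <= 0) ->
  (forall a, 0 < a < a0 -> f a <= a * C) -> f 1 <= 0.
Proof.
move=> Ha0 HC Hder Hneg Hsmall.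
apply: (le0_of_le_small_mul (a1 := Rmin a0 1) _ HC); first by apply: Rmin_glb_lt; lra.
move=> a Ha; have Ha1 := Rmin_r a0 1; have Ha2 := Rmin_l a0 1.
have [c [Hmvt Hc]] := MVT_cor2 f f' a 1 ltac:(lra) (fun c Hc => Hder c ltac:(lra)).
have := Hneg c ltac:(lra); have := Hsmall a ltac:(lra); nra.
Qed.

Section HolderLinearization.
Variable n : nat.
Variables (Omega : vec n -> Prop) (F : vec n -> vec n) (DF : vec n -> mat n).
Hypotheses (HO : vopen Omega) (HJ : has_jacobian_on Omega F DF).

Lemma comparison_deriv (xs e d : vec n) (A : mat n) k1 c0 p s :
  0 < p -> 0 < s -> Omega (vadd xs (vscal s e)) ->
  derivable_pt_lim (fun s => s * k1 - vinner d (mv A (F (vadd xs (vscal s e))))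
                             - c0 * (s - Rpower s (p + 1) / (p + 1))) s
    (k1 - vinner d (mv A (mv (DF (vadd xs (vscal s e))) e)) - c0 * (1 - Rpower s p)).
Proof.
move=> Hp Hs HX.
have D1 : derivable_pt_lim (fun s => s * k1) s k1.
  by rewrite -[X in derivable_pt_lim _ _ X]Rmult_1_l;
     apply/derivable_pt_lim_scal_right/derivable_pt_lim_id.
have D2 := line_deriv HO HJ d A HX.
have D3 : derivable_pt_lim (fun s => s - Rpower s (p + 1) / (p + 1)) s (1 - Rpower s p).
  have -> : 1 - Rpower s p = 1 - (p + 1) * Rpower s (p + 1 - 1) * / (p + 1).
    by rewrite (_ : p + 1 - 1 = p); [field; lra | ring].
  apply: derivable_pt_lim_minus; first exact: derivable_pt_lim_id.
  by apply: derivable_pt_lim_scal_right; apply: derivable_pt_lim_power.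
have D := derivable_pt_lim_minus _ _ _ _ _ (derivable_pt_lim_minus _ _ _ _ _ D1 D2)
                                  (derivable_pt_lim_scal _ c0 _ _ D3).
exact: D.
Qed.

Lemma holder_linearization (xs x : vec n) (A : mat n) K p :
  0 <= K -> 0 < p -> F xs = vzero ->
  (forall t, 0 <= t <= 1 -> Omega (vadd xs (vscal t (vsub x xs)))) ->
  (forall t, 0 <= t <= 1 ->
     opnorm (mm A (msub (DF x) (DF (vadd xs (vscal t (vsub x xs))))))
       <= K * (1 - rpow t p) * rpow (vdist x xs) p) ->
  vnorm (vsub (mv A (mv (DF x) (vsub x xs))) (mv A (F x)))
    <= K * p / (p + 1) * rpow (vdist x xs) (p + 1).
Proof.
move=> HK Hp HF0 Hseg Hhol; rewrite /vdist in Hhol *.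
set e := vsub x xs in Hseg Hhol *.
set d := vsub (mv A (mv (DF x) e)) (mv A (F x)).
have He := vnorm_ge0 e; have Hd := vnorm_ge0 d.
case: (Req_dec (vnorm e) 0) => [/vnorm_eq0 He0 | He0].
  have Hx : x = xs.
    by apply: functional_extensionality => i;
      have := congr1 (fun f => f i) He0; rewrite /e /vsub /vzero /=; lra.
  have -> : d = vzero.
    by rewrite /d /e Hx HF0 (_ : vsub xs xs = vzero) ?mv_zero; [vext | vext].
  rewrite vnorm0; apply: Rmult_le_pos; last exact: rpow_ge0.
  by apply: div_ge0; [apply: Rmult_le_pos|]; lra.
rewrite rpowS // rpow_pos in Hhol *; try lra.
set Ep := Rpower (vnorm e) p in Hhol *.
have HEp : 0 < Ep by apply: exp_pos.
set k1 := vinner d (mv A (mv (DF x) e)).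
set c0 := vnorm d * (K * Ep * vnorm e).
have Hc0 : 0 <= c0 by apply: Rmult_le_pos => //; apply: Rmult_le_pos; nra.
(* The bound is [psi 1 <= 0]; the Hölder hypothesis is exactly [psi' <= 0]. *)
pose psi s := s * k1 - vinner d (mv A (F (vadd xs (vscal s e))))
              - c0 * (s - Rpower s (p + 1) / (p + 1)).
pose psi' s := k1 - vinner d (mv A (mv (DF (vadd xs (vscal s e))) e)) - c0 * (1 - Rpower s p).
have Hder : forall s, 0 < s <= 1 -> derivable_pt_lim psi s (psi' s).
  by move=> s Hs; apply: comparison_deriv; [lra | lra | apply: Hseg; lra].
have Hneg : forall s, 0 < s <= 1 -> psi' s <= 0.
  move=> s Hs; rewrite /psi'.
  set D := mm A (msub (DF x) (DF (vadd xs (vscal s e)))).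
  have -> : k1 - vinner d (mv A (mv (DF (vadd xs (vscal s e))) e)) = vinner d (mv D e).
    by rewrite /D mv_mm mv_msub mv_sub vinnerBr.
  have := Hhol s ltac:(lra); rewrite rpow_pos; last lra.
  move=> HD; have := Rle_trans _ _ _ (opnorm_mv D e) (Rmult_le_compat_r _ _ _ He HD).
  have := vinner_le d (mv D e); rewrite /c0; nra.
have HO0 : Omega xs by have := Hseg 0 ltac:(lra); rewrite (_ : vadd xs (vscal 0 e) = xs) //; vext.
have [a0 [Ha0 Hsmall]] := F_small_on_line HO HJ e HO0 HF0.
set L := vnorm d * (opnorm A * ((opnorm (DF xs) + 1) * vnorm e)).
have HL : 0 <= L.
  apply: Rmult_le_pos => //; apply: Rmult_le_pos; first exact: opnorm_ge0.
  by apply: Rmult_le_pos => //; have := opnorm_ge0 (DF xs); lra.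
have Hpsi_small : forall a, 0 < a < Rmin a0 1 -> psi a <= a * (Rabs k1 + L).
  move=> a Ha; have Ha0' := Rmin_l a0 1; have Ha1 := Rmin_r a0 1.
  have Hv : - vinner d (mv A (F (vadd xs (vscal a e)))) <= a * L.
    apply: (Rle_trans _ _ _ (Rle_abs _)); rewrite Rabs_Ropp.
    apply: (Rle_trans _ _ _ (cauchy_schwarz _ _)).
    have -> : a * L = vnorm d * (opnorm A * (a * ((opnorm (DF xs) + 1) * vnorm e))) by rewrite /L; ring.
    apply: Rmult_le_compat_l => //; apply: Rle_trans (opnorm_mv A _) _.
    by apply: Rmult_le_compat_l; [exact: opnorm_ge0 | apply: Hsmall; lra].
  have := Rmult_le_compat_l _ _ _ (Rlt_le _ _ (proj1 Ha)) (Rle_abs k1).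
  have := Rmult_le_pos _ _ Hc0 (Rpower_succ_div_le Hp (ltac:(lra) : 0 < a <= 1)).
  rewrite /psi; lra.
have Hpsi1 : psi 1 = vnorm d * vnorm d - c0 * (p / (p + 1)).
  rewrite /psi (_ : vadd xs (vscal 1 e) = x); last by rewrite /e; vext.
  rewrite (_ : Rpower 1 (p + 1) = 1); last by rewrite /Rpower ln_1 Rmult_0_r exp_0.
  have Edd : vinner d d = k1 - vinner d (mv A (F x)) by rewrite {2}/d vinnerBr.
  by rewrite vnorm_sq Edd; field; lra.
have := le0_at1_of_deriv_le0 (Rmin_glb_lt _ _ _ Ha0 Rlt_0_1)
          (Rplus_le_le_0_compat _ _ (Rabs_pos k1) HL) Hder Hneg Hpsi_small.
rewrite Hpsi1 /c0 => Hsq.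
have -> : K * p / (p + 1) * (vnorm e * Ep) = K * Ep * vnorm e * (p / (p + 1)) by field; lra.
have : 0 <= K * Ep * vnorm e * (p / (p + 1)).
  by apply: Rmult_le_pos; [apply: Rmult_le_pos; nra | apply: div_ge0; lra].
nra.
Qed.

End HolderLinearization.

Definition lin_rate (w1 w2 vt mu : R) := w1 * ((1 + vt) * mu + vt) + w2.

Lemma le_add_mul_of_sq_le a b c mu : 0 <= a -> 0 <= b -> 0 <= c -> 0 <= mu ->
  a * a <= b * b + mu * mu * (c * c) -> a <= b + mu * c.
Proof. move=> Ha Hb Hc Hmu H; have := Rmult_le_pos _ _ Hmu Hc; nra. Qed.

Section InexactNewtonStep.
Variable n : nat.
Implicit Types (A D G M P : mat n) (e r s u v y : vec n).

Lemma near_identity_lower A D q :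
  (forall v, vnorm (vsub (mv A (mv D v)) v) <= q * vnorm v) ->
  forall v, (1 - q) * vnorm v <= vnorm (mv A (mv D v)).
Proof.
move=> Hq v; have := Hq v; have := vnormB (mv A (mv D v)) (vsub (mv A (mv D v)) v).
by rewrite (_ : vsub _ (vsub _ v) = v); [lra | vext].
Qed.

Lemma near_identity_invertible A D q :
  (forall v, vnorm (vsub (mv A (mv D v)) v) <= q * vnorm v) -> q < 1 -> invertible D.
Proof.
move=> Hq Hq1; apply: invertible_of_kernel0 => v Hv; apply: vnorm_eq0.
have := near_identity_lower Hq v; rewrite Hv !mv_zero vnorm0.
have := vnorm_ge0 v; nra.
Qed.

Lemma newton_correction_bound A D (Fx : vec n) e q delta :
  (forall v, vnorm (vsub (mv A (mv D v)) v) <= q * vnorm v) -> q < 1 ->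
  vnorm (vsub (mv A (mv D e)) (mv A Fx)) <= delta ->
  vnorm (vsub e (mv (minv D) Fx)) <= delta / (1 - q).
Proof.
move=> Hq Hq1 Hdelta.
have [HD1 _] := minv_spec (near_identity_invertible Hq Hq1).
have := near_identity_lower Hq (vsub e (mv (minv D) Fx)).
rewrite !mv_sub -(mv_mm D) HD1 mv_mid => H.
apply: (Rmult_le_reg_l (1 - q)); first lra.
by rewrite (_ : (1 - q) * (delta / (1 - q)) = delta); [lra | field; lra].
Qed.

(* [G r = (G D) (P D)^-1 (P r)], and [||P r|| <= eta ||P D|| ||u||] when [eta >= 0]. *)
Lemma preconditioned_residual_bound G D P r u w1 vt eta :
  invertible D -> invertible P ->
  opnorm (mm G D) <= w1 ->
  vnorm (mv P r) <= eta * vnorm (mv P (mv D u)) ->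
  0 <= eta * cond (mm P D) <= vt ->
  vnorm (mv G r) <= w1 * vt * vnorm u.
Proof.
move=> HD HP Hw1 Hres Heta.
have [P' [HPP' HP'P]] := HP; have [HD1 HD2] := minv_spec HD.
have HPD : invertible (mm P D) by apply: invertible_mm.
set Q := minv (mm P D); have [HQ1 _] := minv_spec HPD.
have HDQP : mm D (mm Q P) = mid.
  have HDQ : mm D Q = P'.
    by rewrite -[RHS]mm_mid_r -HQ1 !mmA HP'P mm_mid_l.
  by rewrite mmA HDQ HP'P.
have -> : mv G r = mv (mm G D) (mv Q (mv P r)).
  by rewrite mv_mm -(mv_mm Q) -(mv_mm D) HDQP mv_mid.
have Hu := vnorm_ge0 u; have HQ := opnorm_ge0 Q; have HPD0 := opnorm_ge0 (mm P D).
have HGD := opnorm_ge0 (mm G D).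
have HQPr : opnorm Q * vnorm (mv P r) <= eta * cond (mm P D) * vnorm u.
  case: (Rle_dec 0 eta) => Heta0.
  - have := opnorm_mv (mm P D) u; rewrite mv_mm => HPu.
    have := Rmult_le_compat_l _ _ _ HQ Hres.
    have := Rmult_le_compat_l _ _ _ (Rmult_le_pos _ _ HQ Heta0) HPu.
    rewrite /cond -/Q; nra.
  - move/Rnot_le_lt: Heta0 => Heta0.
    have HPr0 : vnorm (mv P r) = 0.
      by have := vnorm_ge0 (mv P (mv D u)); have := vnorm_ge0 (mv P r); nra.
    by rewrite HPr0 Rmult_0_r; apply: Rmult_le_pos; [exact: (proj1 Heta) | exact: Hu].
apply: (Rle_trans _ _ _ (opnorm_mv _ _)).
apply: (Rle_trans _ (w1 * (opnorm Q * vnorm (mv P r)))).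
  apply: Rmult_le_compat => //; [exact: vnorm_ge0 | exact: opnorm_mv].
rewrite Rmult_assoc; apply: Rmult_le_compat_l; first lra.
have := Rmult_le_compat_r _ _ _ Hu (proj2 Heta); lra.
Qed.

Lemma inexact_newton_error G D e u s r w1 w2 vt :
  s = vadd (vopp (mv (mm G D) u)) (mv G r) ->
  opnorm (mm G D) <= w1 -> opnorm (msub (mm G D) mid) <= w2 ->
  vnorm (mv G r) <= w1 * vt * vnorm u ->
  vnorm s <= w1 * (1 + vt) * vnorm u /\
  vnorm (vadd e s) <= w2 * vnorm e + w1 * vnorm (vsub e u) + w1 * vt * vnorm u.
Proof.
move=> Hs Hw1 Hw2 HGr.
have HGDu := Rle_trans _ _ _ (opnorm_mv _ _) (Rmult_le_compat_r _ _ _ (vnorm_ge0 u) Hw1).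
split; first by rewrite Hs; apply: (Rle_trans _ _ _ (vnormD _ _)); rewrite vnormN; lra.
have -> : vadd e s = vadd (vadd (vopp (mv (msub (mm G D) mid) e)) (mv (mm G D) (vsub e u)))
                          (mv G r) by rewrite Hs mv_msub mv_mid mv_sub; vext.
apply: (Rle_trans _ _ _ (vnormD _ _)); apply: Rplus_le_compat => //.
apply: (Rle_trans _ _ _ (vnormD _ _)); rewrite vnormN; apply: Rplus_le_compat.
- exact: Rle_trans (opnorm_mv _ _) (Rmult_le_compat_r _ _ _ (vnorm_ge0 e) Hw2).
- exact: Rle_trans (opnorm_mv _ _) (Rmult_le_compat_r _ _ _ (vnorm_ge0 _) Hw1).
Qed.

Lemma inexact_step_bound A D M P (Fx : vec n) e s r y q delta w1 w2 vt eta theta :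
  (forall v, vnorm (vsub (mv A (mv D v)) v) <= q * vnorm v) -> q < 1 -> 0 <= delta ->
  vnorm (vsub (mv A (mv D e)) (mv A Fx)) <= delta ->
  invertible M -> invertible P ->
  opnorm (mm (minv M) D) <= w1 -> opnorm (msub (mm (minv M) D) mid) <= w2 ->
  mv M s = vadd (vopp Fx) r ->
  vnorm (mv P r) <= eta * vnorm (mv P Fx) ->
  0 <= eta * cond (mm P D) <= vt -> 0 <= theta ->
  vinner y y <= vinner (vadd e s) (vadd e s) + 2 * (theta * vnorm s ^ 2) ->
  vnorm y <= w1 * (1 + vt) * (1 + sqrt (2 * theta)) * (delta / (1 - q))
             + lin_rate w1 w2 vt (sqrt (2 * theta)) * vnorm e.
Proof.
move=> Hq Hq1 Hdelta0 Hdelta HM HP Hw1 Hw2 HMs Hres Heta Htheta Hy.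
have HD := near_identity_invertible Hq Hq1; have [HD1 HD2] := minv_spec HD.
set u := mv (minv D) Fx.
have HDu : mv D u = Fx by rewrite /u -mv_mm HD1 mv_mid.
set dl := delta / (1 - q).
have Hdl : 0 <= dl by apply: div_ge0; lra.
have Heu : vnorm (vsub e u) <= dl := newton_correction_bound Hq Hq1 Hdelta.
have Hu : vnorm u <= vnorm e + dl.
  have := vnormB e (vsub e u); rewrite (_ : vsub e (vsub e u) = u); [lra | vext].
have [_ HM2] := minv_spec HM; set G := minv M in Hw1 Hw2 HM2 *.
have Hs : s = vadd (vopp (mv (mm G D) u)) (mv G r).
  by rewrite mv_mm HDu -mv_opp -mv_add -HMs -mv_mm HM2 mv_mid.
have HGr : vnorm (mv G r) <= w1 * vt * vnorm u.
  by apply: (preconditioned_residual_bound HD HP Hw1 _ Heta); rewrite HDu.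
have Hw10 : 0 <= w1 by have := opnorm_ge0 (mm G D); lra.
have Hvt : 0 <= vt by case: Heta; lra.
have [Hsu Hesu] := inexact_newton_error e Hs Hw1 Hw2 HGr.
have Hsn : vnorm s <= w1 * (1 + vt) * (vnorm e + dl).
  by apply: (Rle_trans _ _ _ Hsu); apply: Rmult_le_compat_l; nra.
have Hesn : vnorm (vadd e s) <= w2 * vnorm e + w1 * dl + w1 * vt * (vnorm e + dl).
  by have := Rmult_le_compat_l _ _ _ Hw10 Heu; have := Rmult_le_compat_l _ _ _ (Rmult_le_pos _ _ Hw10 Hvt) Hu; lra.
set mu := sqrt (2 * theta).
have Hmu : 0 <= mu by apply: sqrt_pos.
have Hyn : vnorm y <= vnorm (vadd e s) + mu * vnorm s.
  apply: le_add_mul_of_sq_le => //; try exact: vnorm_ge0.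
  rewrite (vnorm_sq y) (vnorm_sq (vadd e s)) sqrt_sqrt; nra.
rewrite /lin_rate; have := Rmult_le_compat_l _ _ _ Hmu Hsn; nra.
Qed.

End InexactNewtonStep.

Lemma ext_sup_spec (S : R -> Prop) : (exists t, S t) -> is_ext_sup S (ext_sup S).
Proof.
move=> Hne; apply: epsilon_spec.
case: (classic (exists M, forall t, S t -> t <= M)) => Hb.
- by have [m Hm] := completeness S Hb Hne; exists (Some m).
- exists None => M /=; apply: NNPP => HM; apply: Hb; exists M => t St.
  by apply: Rnot_lt_le => Hlt; apply: HM; exists t.
Qed.

Lemma ext_lt_sup_witness (S : R -> Prop) k t :
  is_ext_sup S k -> ext_lt t k -> exists t', S t' /\ t < t'.
Proof.
case: k => [s [_ Hlub] /= Hts | H _]; last exact: H.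
apply: NNPP => H; suff : s <= t by lra.
apply: Hlub => t' St'; apply: Rnot_lt_le => Hlt; apply: H; by exists t'.
Qed.

Lemma ext_lt_le t t' k : ext_lt t k -> t' <= t -> ext_lt t' k.
Proof. by case: k => [s|] //= H1 H2; lra. Qed.

Lemma ext_min_lt t k r : t < ext_min k r -> ext_lt t k /\ t < r.
Proof. by case: k => [s|] //= H; have := Rmin_l s r; have := Rmin_r s r; lra. Qed.

Lemma sqrt_add_le a b : 0 <= a -> 0 <= b -> sqrt (a + b) <= sqrt a + sqrt b.
Proof.
move=> Ha Hb; have Hsa := sqrt_pos a; have Hsb := sqrt_pos b.
rewrite -(sqrt_pow2 (sqrt a + sqrt b)); last lra.
by apply: sqrt_le_1_alt; have := sqrt_sqrt a Ha; have := sqrt_sqrt b Hb; nra.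
Qed.

Lemma limsup_spec (u : nat -> R) m M : (forall k, m <= u k <= M) -> is_limsup u (limsup u).
Proof.
move=> Hb; have [[l| |] /= Hl] := ex_LimSup_seq u.
- apply: epsilon_spec; exists l => eps Heps.
  have [H1 [N H2]] := Hl (mkposreal eps Heps); split.
  + by exists N => k /leP; exact: H2.
  + by move=> N'; have [k [/leP Hk Hk']] := H1 N'; exists k.
- by have [k [_ Hk]] := Hl (M + 1) 0%nat; have := Hb k; lra.
- by have [N HN] := Hl m; have := HN N (le_n N); have := Hb N; lra.
Qed.

Lemma limsup_ge0 (u : nat -> R) M : (forall k, 0 <= u k <= M) -> 0 <= limsup u.
Proof.
move=> Hb; apply: Rnot_lt_le => Hneg.
have [[N HN] _] := limsup_spec Hb (ltac:(lra) : 0 < - limsup u).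
by have := HN N (leqnn N); have := Hb N; lra.
Qed.

Lemma Un_cv_geometric (u : nat -> R) rho c :
  0 <= rho < 1 -> 0 < c -> (forall k, 0 <= u k <= rho ^ k * c) -> Un_cv u 0.
Proof.
move=> Hrho Hc Hu eps Heps.
have [N HN] := pow_lt_1_zero rho ltac:(rewrite Rabs_pos_eq; lra) (eps / c) (Rdiv_lt_0_compat _ _ Heps Hc).
exists N => k Hk; rewrite /R_dist Rminus_0_r Rabs_pos_eq; last by have := Hu k; lra.
have := HN k Hk; rewrite Rabs_pos_eq; last by apply: pow_le; lra.
move=> Hk'; have := Hu k; have := Rmult_lt_compat_r c _ _ Hc Hk'.
by rewrite (_ : eps / c * c = eps); [lra | field; lra].
Qed.

Lemma Un_cv_rpow (u : nat -> R) c p : 0 < p -> (forall k, 0 <= u k) -> Un_cv u 0 ->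
  Un_cv (fun k => c * rpow (u k) p) 0.
Proof.
move=> Hp Hu0 Hu eps Heps.
have Hc := Rabs_pos c; set b := eps / (Rabs c + 1).
have Hb : 0 < b by apply: Rdiv_lt_0_compat; lra.
have [N HN] := Hu _ (exp_pos (/ p * ln b)).
exists N => k Hk; rewrite /R_dist Rminus_0_r Rabs_mult (Rabs_pos_eq (rpow _ _)); last exact: rpow_ge0.
have := HN k Hk; rewrite /R_dist Rminus_0_r Rabs_pos_eq // => Huk.
have Hr : rpow (u k) p < b by apply: Rpower_inv_lt.
have : Rabs c * b < eps.
  rewrite /b; apply: (Rmult_lt_reg_r (Rabs c + 1)); first lra.
  by rewrite (_ : Rabs c * (eps / (Rabs c + 1)) * (Rabs c + 1) = Rabs c * eps); [nra | field; lra].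
have := rpow_ge0 (u k) p; nra.
Qed.

(* Eventually [th_k < limsup th + eta^2], and [sqrt] is subadditive. *)
Lemma limsup_le_sqrt (u a th : nat -> R) alpha beta m M M' :
  (forall k, m <= u k <= M) -> (forall k, 0 <= th k <= M') -> 0 <= alpha -> Un_cv a 0 ->
  (forall k, u k <= a k + alpha * sqrt (2 * th k) + beta) ->
  limsup u <= alpha * sqrt (2 * limsup th) + beta.
Proof.
move=> Hu Hth Halpha Ha Hbound.
have HLu := limsup_spec Hu; have HLt := limsup_spec Hth; have HLt0 := limsup_ge0 Hth.
set Lu := limsup u in HLu *; set Lt := limsup th in HLt HLt0 *.
have Hs2 := sqrt_pos 2.
suff : Lu - (alpha * sqrt (2 * Lt) + beta) <= 0 by lra.
apply: (le0_of_le_small_mul (a1 := 1) Rlt_0_1 (C := alpha * sqrt 2 + 2)); first nra.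
move=> eta Heta.
have Hep : 0 < eta * eta by nra.
have [[N1 HN1] _] := HLt _ Hep.
have [N2 HN2] := Ha _ (proj1 Heta).
have [k [Hk Huk]] := proj2 (HLu _ (proj1 Heta)) (maxn N1 N2).
have Hthk := HN1 k (leq_trans (leq_maxl N1 N2) Hk).
have Hak := HN2 k ltac:(apply/leP; exact: leq_trans (leq_maxr N1 N2) Hk).
rewrite /R_dist Rminus_0_r in Hak; have := Rle_abs (a k).
have Hsq : sqrt (2 * th k) <= sqrt (2 * Lt) + sqrt 2 * eta.
  apply: (Rle_trans _ (sqrt (2 * Lt + 2 * (eta * eta)))); first by apply: sqrt_le_1_alt; lra.
  apply: (Rle_trans _ _ _ (sqrt_add_le _ _)); try nra.
  by rewrite (sqrt_mult 2 (eta * eta)); [rewrite sqrt_square; lra | lra | nra].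
have := Rmult_le_compat_l _ _ _ Halpha Hsq; have := Hbound k; nra.
Qed.

Lemma near_identity_of_opnorm n (A D D0 : mat n) q :
  mm A D0 = mid -> opnorm (mm A (msub D D0)) <= q ->
  forall v, vnorm (vsub (mv A (mv D v)) v) <= q * vnorm v.
Proof.
move=> HA0 Hq v; have := opnorm_mv (mm A (msub D D0)) v.
rewrite mv_mm mv_msub mv_sub -(mv_mm A D0) HA0 mv_mid => H.
exact: Rle_trans H (Rmult_le_compat_r _ _ _ (vnorm_ge0 v) Hq).
Qed.

Lemma lin_rate_le w1 w2 vt mu mu' : 0 <= w1 -> 0 <= vt -> mu <= mu' ->
  lin_rate w1 w2 vt mu <= lin_rate w1 w2 vt mu'.
Proof. by move=> Hw1 Hvt Hmu; rewrite /lin_rate; have := Rmult_le_compat_l _ _ _ Hw1 Hmu; nra. Qed.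

Lemma quadratic_term_le w1 vt mu lam K p E e0 :
  0 <= w1 -> 0 <= vt -> 0 <= mu <= lam -> 0 <= K -> 0 < p -> 0 <= E <= e0 ->
  K * rpow e0 p < 1 ->
  w1 * (1 + vt) * (1 + mu) * (K * p / (p + 1) * rpow E (p + 1) / (1 - K * rpow E p))
  <= w1 * (1 + vt) * (1 + lam) * p * K / ((p + 1) * (1 - K * rpow e0 p)) * rpow E (p + 1).
Proof.
move=> Hw1 Hvt Hmu HK Hp HE Hq0.
have HqE : K * rpow E p <= K * rpow e0 p by apply: Rmult_le_compat_l => //; apply: rpow_le; lra.
have HEp := rpow_ge0 E (p + 1).
have Hdiv : / (1 - K * rpow E p) <= / (1 - K * rpow e0 p) by apply: Rinv_le_contravar; lra.
have -> : w1 * (1 + vt) * (1 + lam) * p * K / ((p + 1) * (1 - K * rpow e0 p)) * rpow E (p + 1)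
  = w1 * (1 + vt) * (1 + lam) * (K * p / (p + 1) * rpow E (p + 1) / (1 - K * rpow e0 p)).
  by field; split; lra.
apply: Rmult_le_compat.
- by apply: Rmult_le_pos; [apply: Rmult_le_pos|]; lra.
- apply: Rmult_le_pos; last by apply: Rlt_le; apply: Rinv_0_lt_compat; have := rpow_ge0 E p; nra.
  by apply: Rmult_le_pos => //; apply: div_ge0; [apply: Rmult_le_pos|]; lra.
- by apply: Rmult_le_compat_l; [apply: Rmult_le_pos|]; lra.
- apply: Rmult_le_compat_l => //.
  by apply: Rmult_le_pos => //; apply: div_ge0; [apply: Rmult_le_pos|]; lra.
Qed.

Section LocalConvergence.
Context {n : nat} {Omega C : vec n -> Prop} {F : vec n -> vec n} {DF : vec n -> mat n}.
Context {xs : vec n} {K p vt w1 w2 lam : R} {theta eta : nat -> R}.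
Context {x s r y : nat -> vec n} {M P : nat -> mat n}.

Let err k := vdist (x k) xs.
Let c := w1 * (1 + vt) * (1 + lam) * p * K / ((p + 1) * (1 - K * rpow (err 0) p)).
Let rho := c * rpow (err 0) p + lin_rate w1 w2 vt lam.

Hypotheses (HO : vopen Omega) (HJ : has_jacobian_on Omega F DF) (HCconv : vconvex C).
Hypotheses (Hxs : C xs) (HFxs : F xs = vzero) (HDFxs : invertible (DF xs)).
Hypotheses (HK : 0 <= K) (Hp : 0 < p) (Hvt : 0 <= vt) (Hw1 : 0 <= w1) (Hlam : 0 <= lam).
Hypothesis Hball : forall z, vdist z xs <= err 0 -> Omega z.
Hypothesis Hholder : forall tau z, 0 <= tau <= 1 -> vdist z xs <= err 0 ->
  opnorm (mm (minv (DF xs)) (msub (DF z) (DF (vadd xs (vscal tau (vsub z xs))))))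
    <= K * (1 - rpow tau p) * rpow (vdist z xs) p.
Hypotheses (Hsmall : K * rpow (err 0) p < 1) (Hrho : rho < 1).
Hypotheses (HC0 : C (x 0)) (Htheta : forall k, 0 <= theta k <= lam ^ 2 / 2).
Hypothesis Hnostop : forall k, F (x k) <> vzero.
Hypotheses (HMinv : forall k, invertible (M k)) (HPinv : forall k, invertible (P k)).
Hypothesis Hlin : forall k, mv (M k) (s k) = vadd (vopp (F (x k))) (r k).
Hypothesis Hy : forall k, y k = vadd (x k) (s k).
Hypothesis Hstep : forall k, condG C (y k) (theta k * (vnorm (s k)) ^ 2) (x k) (x (S k)).
Hypothesis Hw1k : forall k, opnorm (mm (minv (M k)) (DF (x k))) <= w1.
Hypothesis Hw2k : forall k, opnorm (msub (mm (minv (M k)) (DF (x k))) mid) <= w2.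
Hypothesis Hres : forall k, vnorm (mv (P k) (r k)) <= eta k * vnorm (mv (P k) (F (x k))).
Hypothesis Heta : forall k, 0 <= eta k * cond (mm (P k) (DF (x k))) <= vt.

Lemma err_pos k : 0 < err k.
Proof.
have Hne : x k <> xs by move=> Hk; apply: (@Hnostop k); rewrite Hk.
have := vnorm_ge0 (vsub (x k) xs); rewrite -/(vdist _ _) -/(err k) => H0.
by case: (Rle_lt_or_eq_dec 0 (err k) H0) => // /esym /vdist_eq0.
Qed.

Lemma sqrt_theta_le k : 0 <= sqrt (2 * theta k) <= lam.
Proof.
split; first exact: sqrt_pos.
rewrite -(sqrt_pow2 lam) //; apply: sqrt_le_1_alt; have := Htheta k; lra.
Qed.

Lemma one_step k : C (x k) -> err k <= err 0 ->
  C (x (S k)) /\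
  err (S k) <= c * rpow (err k) (p + 1) + lin_rate w1 w2 vt (sqrt (2 * theta k)) * err k.
Proof.
move=> HCk Hek; have HE0 := vnorm_ge0 (vsub (x k) xs); rewrite -/(vdist _ _) -/(err k) in HE0.
have [HA1 HA2] := minv_spec HDFxs.
have Hseg : forall t, 0 <= t <= 1 -> Omega (vadd xs (vscal t (vsub (x k) xs))).
  move=> t Ht; apply: Hball; rewrite /vdist.
  rewrite (_ : vsub _ xs = vscal t (vsub (x k) xs)); last by vext.
  by rewrite vnormZ Rabs_pos_eq; [rewrite -/(vdist _ _) -/(err k); nra | lra].
have Htaylor := holder_linearization HO HJ HK Hp HFxs Hseg (fun t Ht => Hholder Ht Hek).
have Hnear : forall v, vnorm (vsub (mv (minv (DF xs)) (mv (DF (x k)) v)) v)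
                       <= K * rpow (err k) p * vnorm v.
  apply: (near_identity_of_opnorm HA2).
  have := Hholder (tau := 0) (z := x k) ltac:(lra) Hek.
  by rewrite rpow0 (_ : vadd xs (vscal 0 (vsub (x k) xs)) = xs); [rewrite -/(err k); lra | vext].
have Hq : K * rpow (err k) p < 1.
  by have := Rmult_le_compat_l _ _ _ HK (rpow_le (Rlt_le _ _ Hp) (conj HE0 Hek)); lra.
have Htheta0 : 0 <= theta k by have := Htheta k; lra.
have Heps : 0 <= theta k * vnorm (s k) ^ 2 by apply: Rmult_le_pos => //; apply: pow2_ge_0.
have [HC' Hcg] := condG_spec HCconv Heps (Hstep k) HCk Hxs.
split => //.
rewrite Hy (_ : vsub (vadd (x k) (s k)) xs = vadd (vsub (x k) xs) (s k)) in Hcg; last by vext.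
have Hdelta : 0 <= K * p / (p + 1) * rpow (err k) (p + 1).
  by apply: Rmult_le_pos; [apply: div_ge0; [apply: Rmult_le_pos|]; lra | exact: rpow_ge0].
have := inexact_step_bound Hnear Hq Hdelta Htaylor (HMinv k) (HPinv k) (Hw1k k) (Hw2k k)
  (Hlin k) (Hres k) (Heta k) Htheta0 Hcg.
have := quadratic_term_le Hw1 Hvt (sqrt_theta_le k) HK Hp (conj HE0 Hek) Hsmall.
rewrite /c /err /vdist; lra.
Qed.

Lemma c_ge0 : 0 <= c.
Proof.
apply: div_ge0; first by apply: Rmult_le_pos => //; apply: Rmult_le_pos; [|lra];
  apply: Rmult_le_pos; [apply: Rmult_le_pos|]; lra.
by apply: Rmult_le_pos; lra.
Qed.

Lemma err_bound k : C (x k) -> err k <= err 0 ->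
  C (x (S k)) /\ err (S k) <= c * rpow (err k) (p + 1) + lin_rate w1 w2 vt lam * err k.
Proof.
move=> HCk Hek; have [HC' Hb] := one_step HCk Hek; split => //.
have := lin_rate_le w2 Hw1 Hvt (proj2 (sqrt_theta_le k)).
have := Rlt_le _ _ (err_pos k); nra.
Qed.

Lemma err_contraction k : C (x k) -> err k <= err 0 ->
  C (x (S k)) /\ err (S k) <= rho * err k.
Proof.
move=> HCk Hek; have [HC' Hb] := err_bound HCk Hek; split => //.
have HE := err_pos k.
rewrite rpowS in Hb; last lra.
have := Rmult_le_compat_l _ _ _ c_ge0 (rpow_le (Rlt_le _ _ Hp) (conj (Rlt_le _ _ HE) Hek)).
rewrite /rho; nra.
Qed.

Lemma rho_ge0 : 0 <= rho.
Proof.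
have [_ H1] := err_contraction HC0 (Rle_refl _).
have := vnorm_ge0 (vsub (x 1) xs); have := err_pos 0; rewrite /err /vdist in H1 *; nra.
Qed.

Lemma iterates_geometric k : C (x k) /\ err k <= rho ^ k * err 0.
Proof.
have Hrho0 := rho_ge0; have H0 := err_pos 0.
elim: k => [|k [HCk Hek]]; first by split => //=; lra.
have Hpow : rho ^ k <= 1 by rewrite -(pow1 k); apply: pow_incr; lra.
have [HC' Hb] := err_contraction HCk ltac:(nra).
by split => //=; nra.
Qed.

Lemma err_le_err0 k : C (x k) /\ err k <= err 0.
Proof.
have [HCk Hek] := iterates_geometric k; split => //.
have : rho ^ k <= 1 by rewrite -(pow1 k); apply: pow_incr; have := rho_ge0; lra.
have := err_pos 0; nra.
Qed.

Lemma err_cv0 : Un_cv err 0.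
Proof.
apply: (Un_cv_geometric (rho := rho) (c := err 0)); first by have := rho_ge0; lra.
  exact: err_pos.
by move=> k; split; [exact: Rlt_le (err_pos k) | exact: proj2 (iterates_geometric k)].
Qed.

Lemma err_decreasing k : err (S k) < err k.
Proof.
have [HCk Hek] := err_le_err0 k; have [_ Hb] := err_contraction HCk Hek.
have := err_pos k; have := rho_ge0; nra.
Qed.

Lemma limsup_ratio_le :
  limsup (fun k => err (S k) / err k) <= lin_rate w1 w2 vt (sqrt (2 * limsup theta)).
Proof.
have Hratio : forall k, 0 <= err (S k) / err k <= 1.
  move=> k; have := err_pos k; have := err_pos (S k); have := err_decreasing k => Hd H1 H0.
  split; first by apply: div_ge0; lra.
  by apply: (Rmult_le_reg_r (err k)) => //; rewrite /Rdiv Rmult_assoc Rinv_l; lra.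
rewrite (_ : lin_rate _ _ _ _ = w1 * (1 + vt) * sqrt (2 * limsup theta) + (w1 * vt + w2));
  last by rewrite /lin_rate; ring.
apply: (limsup_le_sqrt Hratio Htheta); first by nra.
  exact: (Un_cv_rpow c Hp (fun k => Rlt_le _ _ (err_pos k)) err_cv0).
move=> k; have [HCk Hek] := err_le_err0 k; have [_ Hb] := one_step HCk Hek.
have HE := err_pos k.
rewrite rpowS in Hb; last lra.
apply: (Rmult_le_reg_r (err k)) => //.
rewrite /Rdiv Rmult_assoc Rinv_l ?Rmult_1_r; last lra.
move: Hb; rewrite /lin_rate; lra.
Qed.

Theorem inl_condG_local_convergence :
  (forall k, C (x k) /\ err k <= err 0) /\ Un_cv err 0 /\ (forall k, err (S k) < err k) /\
  limsup (fun k => err (S k) / err k) <= lin_rate w1 w2 vt (sqrt (2 * limsup theta)) /\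
  (forall k, err (S k) <= c * rpow (err k) (p + 1) + lin_rate w1 w2 vt lam * err k).
Proof.
split; first exact: err_le_err0.
split; first exact: err_cv0.
split; first exact: err_decreasing.
split; first exact: limsup_ratio_le.
by move=> k; have [HCk Hek] := err_le_err0 k; exact: proj2 (err_bound HCk Hek).
Qed.

End LocalConvergence.

Lemma lin_rate_lt1 w1 w2 vt lam : 0 < w1 -> 0 <= vt ->
  lam < (1 - w2 - w1 * vt) / (w1 * (1 + vt)) -> lin_rate w1 w2 vt lam < 1.
Proof.
move=> Hw1 Hvt Hlam; have Hd : 0 < w1 * (1 + vt) by nra.
have := Rmult_lt_compat_r _ _ _ Hd Hlam.
by rewrite /lin_rate (_ : _ / _ * _ = 1 - w2 - w1 * vt); [nra | field; lra].
Qed.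

(* With [B] the linear rate, [W = w1 (1 + vt) (1 + lam) p] and [q = K e0^p], the paper's radius
   reads [q < (1 - B)(p + 1) / ((1 - B)(p + 1) + W)], i.e. [W q / ((p + 1)(1 - q)) < 1 - B]. *)
Lemma radius_contraction K p w1 w2 vt lam e0 :
  0 < K -> 0 < p -> 0 <= w1 -> 0 <= vt -> 0 <= lam -> lin_rate w1 w2 vt lam < 1 -> 0 <= e0 ->
  e0 < Rpower ((1 - w1 * ((1 + vt) * lam + vt) - w2) * (p + 1)
               / (K * (p - w1 * ((1 + vt) * lam + vt - p) - w2 * (p + 1) + 1))) (1 / p) ->
  K * rpow e0 p < 1 /\
  w1 * (1 + vt) * (1 + lam) * p * K / ((p + 1) * (1 - K * rpow e0 p)) * rpow e0 p
    + lin_rate w1 w2 vt lam < 1.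
Proof.
move=> HK Hp Hw1 Hvt Hlam HB He0.
set B := lin_rate w1 w2 vt lam in HB *.
set W := w1 * (1 + vt) * (1 + lam) * p.
have HW : 0 <= W by rewrite /W; apply: Rmult_le_pos; [apply: Rmult_le_pos; [apply: Rmult_le_pos|]|]; lra.
set Nm := (1 - B) * (p + 1).
have HNm : 0 < Nm by apply: Rmult_lt_0_compat; lra.
rewrite (_ : _ * (p + 1) / _ = Nm / (K * (Nm + W))); last by rewrite /Nm /W /B /lin_rate; congr (_ / (K * _)); ring.
rewrite (_ : 1 / p = / p); last by field; lra.
move=> He0r; have Hb : 0 < Nm / (K * (Nm + W)) by apply: Rdiv_lt_0_compat; nra.
have Hq := Rmult_lt_compat_l _ _ _ HK (Rpower_inv_lt Hp Hb (conj He0 He0r)).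
rewrite (_ : K * (Nm / (K * (Nm + W))) = Nm / (Nm + W)) in Hq; last by field; lra.
set q := K * rpow e0 p in Hq *.
have Hq0 : 0 <= q by apply: Rmult_le_pos; [lra | exact: rpow_ge0].
have Hqlt : q * (Nm + W) < Nm.
  by have := Rmult_lt_compat_r (Nm + W) _ _ ltac:(lra) Hq; rewrite (_ : _ / _ * _ = Nm); [lra | field; lra].
have Hq1 : q < 1 by nra.
split => //.
have -> : W * K / ((p + 1) * (1 - q)) * rpow e0 p = W * q / ((p + 1) * (1 - q)) by rewrite /q /Rdiv; ring.
apply: (Rplus_lt_reg_r (- B)); rewrite (_ : _ + B + - B = W * q / ((p + 1) * (1 - q))); last ring.
apply: (Rmult_lt_reg_r ((p + 1) * (1 - q))); first nra.
rewrite (_ : W * q / _ * _ = W * q); last by field; lra.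
rewrite /Nm in Hqlt; nra.
Qed.

Lemma ball_of_lt_ext_sup n (Omega : vec n -> Prop) xs t :
  ext_lt t (ext_sup (fun t => 0 <= t /\ forall z, vdist z xs < t -> Omega z)) ->
  forall z, vdist z xs <= t -> Omega z.
Proof.
move=> Ht z Hz.
have Hne : exists t, 0 <= t /\ forall z, vdist z xs < t -> Omega z.
  by exists 0; split => [|z' Hz']; [lra | have := vnorm_ge0 (vsub z' xs); rewrite /vdist in Hz'; lra].
have [t' [[_ Hball] Htt']] := ext_lt_sup_witness (ext_sup_spec Hne) Ht.
by apply: Hball; lra.
Qed.

Theorem corollary1
  (n : nat) (Omega : vec n -> Prop) (F : vec n -> vec n) (DF : vec n -> mat n)
  (C : vec n -> Prop) (xs : vec n)
  (HOmega : vopen Omega) (HF : C1_on Omega F DF)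
  (HCsub : forall x, C x -> Omega x) (HCconv : vconvex C) (HCcomp : vcompact C)
  (HCne : exists x, C x)
  (Hxs : C xs) (HFxs : F xs = (@vzero n)) (HDFxs : invertible (DF xs))
  (K p : R) (HK : 0 < K) (Hp : 0 < p <= 1)
  (Hcenter : let kappa := ext_sup (fun t => 0 <= t /\ forall z, vdist z xs < t -> Omega z) in
     forall (tau : R) (x : vec n), 0 <= tau <= 1 -> ext_lt (vdist x xs) kappa ->
       opnorm (mm (minv (DF xs)) (msub (DF x) (DF (vadd xs (vscal tau (vsub x xs))))))
       <= K * (1 - rpow tau p) * rpow (vdist x xs) p)
  (vt w1 w2 lam : R) (Hvt : 0 <= vt < 1) (Hw : 0 <= w2 < w1) (Hw1 : w1 * vt + w2 < 1)
  (Hlam : 0 <= lam < (1 - w2 - w1 * vt) / (w1 * (1 + vt)))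
  (x0 : vec n) (theta : nat -> R)
  (x : nat -> vec n) (M : nat -> mat n) (s r y : nat -> vec n)
  (P : nat -> mat n) (eta : nat -> R)
  (Hx0 : x 0%nat = x0)
  (HxsC0 : C x0)
  (Hx0sig : let kappa := ext_sup (fun t => 0 <= t /\ forall z, vdist z xs < t -> Omega z) in
     let sigma := ext_min kappa
       (Rpower ((1 - w1 * ((1 + vt) * lam + vt) - w2) * (p + 1)
                / (K * (p - w1 * ((1 + vt) * lam + vt - p) - w2 * (p + 1) + 1))) (1 / p)) in
     vdist x0 xs < sigma)
  (Hx0ne : x0 <> xs)
  (Htheta : forall k, 0 <= theta k <= lam ^ 2 / 2)
  (Hnostop : forall k, F (x k) <> (@vzero n))
  (HMinv : forall k, invertible (M k))
  (Hlin : forall k, mv (M k) (s k) = vadd (vopp (F (x k))) (r k))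
  (Hy : forall k, y k = vadd (x k) (s k))
  (Hstep : forall k, condG C (y k) (theta k * (vnorm (s k)) ^ 2) (x k) (x (S k)))
  (Hw1k : forall k, opnorm (mm (minv (M k)) (DF (x k))) <= w1)
  (Hw2k : forall k, opnorm (msub (mm (minv (M k)) (DF (x k))) (@mid n)) <= w2)
  (HPinv : forall k, invertible (P k))
  (Hres : forall k, vnorm (mv (P k) (r k)) <= eta k * vnorm (mv (P k) (F (x k))))
  (Heta : forall k, 0 <= eta k * cond (mm (P k) (DF (x k))) <= vt) :
  let kappa := ext_sup (fun t => 0 <= t /\ forall z, vdist z xs < t -> Omega z) in
  let sigma := ext_min kappa
    (Rpower ((1 - w1 * ((1 + vt) * lam + vt) - w2) * (p + 1)
             / (K * (p - w1 * ((1 + vt) * lam + vt - p) - w2 * (p + 1) + 1))) (1 / p)) in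
  (forall k, vdist (x k) xs < sigma /\ C (x k)) /\
  Un_cv (fun k => vdist (x k) xs) 0 /\
  (forall k, vdist (x (S k)) xs < vdist (x k) xs) /\
  limsup (fun k => vdist (x (S k)) xs / vdist (x k) xs)
    <= w1 * ((1 + vt) * sqrt (2 * limsup theta) + vt) + w2 /\
  (forall k, vdist (x (S k)) xs <=
     w1 * (1 + vt) * (1 + lam) * p * K / ((p + 1) * (1 - K * rpow (vdist x0 xs) p))
       * rpow (vdist (x k) xs) (p + 1)
     + (w1 * ((1 + vt) * lam + vt) + w2) * vdist (x k) xs).
Proof.
move=> kappa sigma; subst x0.
have Hsig : vdist (x 0%nat) xs < sigma := Hx0sig.
have [Hkappa Hradius] := ext_min_lt Hsig.
have Hball := ball_of_lt_ext_sup Hkappa.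
have Hholder tau z (Htau : 0 <= tau <= 1) (Hz : vdist z xs <= vdist (x 0%nat) xs) :=
  Hcenter tau z Htau (ext_lt_le Hkappa Hz).
have Hw1pos : 0 < w1 by lra.
have HB := lin_rate_lt1 Hw1pos (proj1 Hvt) (proj2 Hlam).
have [Hsmall Hrho] := radius_contraction HK (proj1 Hp) (Rlt_le _ _ Hw1pos) (proj1 Hvt) (proj1 Hlam)
  HB (vnorm_ge0 _) Hradius.
have [Hin [Hcv [Hdec [Hlimsup Hbound]]]] :=
  inl_condG_local_convergence HOmega (proj1 HF) HCconv Hxs HFxs HDFxs (Rlt_le _ _ HK) (proj1 Hp)
    (proj1 Hvt) (Rlt_le _ _ Hw1pos) (proj1 Hlam) Hball Hholder Hsmall Hrho HxsC0 Htheta Hnostop HMinv HPinv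
    Hlin Hy Hstep Hw1k Hw2k Hres Heta.
split; first by move=> k; have [HCk Hk] := Hin k; split => //; lra.
by do !split.
Qed.
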